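(* Let $d,q\geq 2$ be integers with $d\mid q$. Then for every $x\in\mathbb{Z}$, the natural density of $\{n\in\mathbb{N}: u_q(n)+x\equiv 0\pmod d\}$ exists and equals $$\frac{1}{d^2}\sum_{f\mid\gcd(x,d)}f\cdot\varphi\!\left(\frac{d}{f}\right),$$ where the sum runs over positive divisors $f$ of $\gcd(x,d)$ and $\varphi$ is Euler's totient function.
   Context: For an integer $q\geq 2$ and $n\in\mathbb{N}$: $v_q(0)=0$ and, for $n>0$, $v_q(n)=\max\{k: q^k\mid n\}$; $w_q(n)=\sum_{i=0}^n v_q(i)$; $u_q(n)=\sum_{i=0}^n w_q(i)$. The natural density of $T\subseteq\mathbb{N}$ is $\lim_{N\to\infty}|\{n\in T: 0\leq n<N\}|/N$. *)

From HB Require Import structures.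
From mathcomp Require Import all_boot all_order all_algebra.
From mathcomp Require Import all_classical all_reals all_analysis.
Set Implicit Arguments. Unset Strict Implicit. Unset Printing Implicit Defensive.
Import Order.TTheory GRing.Theory Num.Theory.
Import numFieldNormedType.Exports.
Local Open Scope classical_set_scope.
Local Open Scope ring_scope.

(* v_q(0) = 0; for n > 0, v_q(n) = max { k : q^k | n }.
   For q >= 2 and n > 0 any such k satisfies k <= n, so the max over k < n.+1
   is the max over all k. *)
Definition vq (q n : nat) : nat :=
  (if n == 0 then 0 else \max_(k < n.+1 | q ^ k %| n) k)%N.

Definition wq (q n : nat) : nat := (\sum_(i < n.+1) vq q i)%N.

Definition uq (q n : nat) : nat := (\sum_(i < n.+1) wq q i)%N.

Definition has_natural_density (R : realType) (T : nat -> bool) (l : R) : Prop :=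
  ((fun N : nat => ((count T (iota 0 N))%:R / N%:R : R)) @ \oo --> l).

(* Since u_q(n) = (n + 1) w_q(n) - sum_(i <= n) i v_q(i), and v_q(i) > 0 forces
   q | i, hence d | i, we get u_q(n) = (n + 1) w_q(n) (mod d).
   Writing n = c q^2 + e q + r with digits e, r < q gives w_q(n) = w_q(c q^2) + e and
   n + 1 = r + 1 (mod d), so each block of q^2 consecutive integers contains exactly
   (q/d)^2 N solutions of u_q(n) + x = 0 (mod d), where N counts the pairs (s, t)
   modulo d with s t + x = 0 (mod d); the density is therefore N / d^2.  For fixed s
   the congruence in t has gcd(s, d) solutions if gcd(s, d) | x and none otherwise,
   and grouping the phi(d/f) residues s with gcd(s, d) = f gives
   N = sum_(f | gcd(x, d)) f phi(d/f). *)

From HB Require Import structures.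
From mathcomp Require Import all_boot all_order all_algebra.
From mathcomp Require Import all_classical all_reals all_analysis.
From mathcomp Require Import zify ring lra.
Import Order.TTheory GRing.Theory Num.Theory.
Local Open Scope nat_scope.

Lemma sum_nat_shift (F : nat -> nat) a n :
  \sum_(a <= i < a + n) F i = \sum_(0 <= i < n) F (a + i).
Proof.
by rewrite -{1}[a]add0n big_addn addKn; apply: eq_bigr => i _; rewrite addnC.
Qed.

Lemma sum_nat_blocks (F : nat -> nat) a k m :
  \sum_(a <= n < a + k * m) F n =
  \sum_(0 <= e < k) \sum_(0 <= r < m) F (a + e * m + r).
Proof.
rewrite sum_nat_shift big_nat_mul; apply: eq_bigr => e _.
by rewrite mulSn addnC sum_nat_shift; apply: eq_bigr => r _; rewrite addnA.
Qed.

Section Periodic.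

Variables (F : nat -> nat) (d : nat).
Hypothesis F_periodic : forall i, F (i + d) = F i.

Lemma sum_nat_period a : \sum_(a <= i < a + d) F i = \sum_(0 <= i < d) F i.
Proof.
elim: a => [|a IHa]; first by rewrite add0n.
apply/eqP; rewrite -(eqn_add2l (F a)) -{}IHa -big_ltn ?addSn ?ltnS ?leq_addr //.
by rewrite big_nat_recr ?leq_addr //= F_periodic addnC.
Qed.

Lemma sum_nat_periodic a k :
  \sum_(a <= i < a + k * d) F i = k * \sum_(0 <= i < d) F i.
Proof.
have F_periodicM i e : F (i + e * d) = F i.
  by elim: e => [|e IHe]; rewrite ?addn0 // mulSn addnA -addnAC F_periodic.
rewrite sum_nat_blocks -[in RHS](subn0 k) -sum_nat_const_nat.
apply: eq_bigr => e _; rewrite -(sum_nat_period a) sum_nat_shift.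
by apply: eq_bigr => r _; rewrite addnAC F_periodicM.
Qed.

End Periodic.

Lemma sum_nat_count (P : pred nat) m n :
  \sum_(m <= i < n) P i = count P (index_iota m n).
Proof. by rewrite -sum1_count [RHS]big_mkcond; apply: eq_bigr => i _; case: (P i). Qed.

Lemma coprime_congr_unique d s y : 0 < d -> coprime s d ->
  exists2 t0, t0 < d & forall t, t < d -> (d %| s * t + y) = (t == t0).
Proof.
move=> d_gt0 co_sd; have [a _ dvd_d_inv] := Bezoutl s d_gt0.
rewrite gcdnC (eqP co_sd) in dvd_d_inv.
have dvd_sol : d %| s * (a * y %% d) + y.
  rewrite /dvdn -modnDml modnMmr modnDml -/(dvdn d _).
  by rewrite (_ : _ + y = y * (1 + a * s)) ?dvdn_mull //; ring.
have congr_inj t t' : t <= t' < d -> d %| s * t + y -> d %| s * t' + y -> t = t'.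
  case/andP=> le_tt' lt_t'd dvd_t dvd_t'.
  have : d %| s * (t' - t) by rewrite mulnBr -(subnDr y) dvdn_sub.
  rewrite Gauss_dvdr 1?coprime_sym //; apply: contraTeq => ne_tt'.
  have lt_tt' : t < t' by rewrite ltn_neqAle ne_tt'.
  by rewrite gtnNdvd ?subn_gt0 // (leq_ltn_trans (leq_subr _ _) lt_t'd).
have lt_t0d : a * y %% d < d by rewrite ltn_pmod.
exists (a * y %% d) => // t lt_td; apply/idP/eqP => [dvd_t|->//].
have [le_tt0|/ltnW le_t0t] := leqP t (a * y %% d).
  by apply: congr_inj; rewrite ?le_tt0.
by apply/esym/congr_inj; rewrite ?le_t0t.
Qed.

Lemma count_linear_congr d s y : 0 < d ->
  \sum_(0 <= t < d) (d %| s * t + y) = (gcdn s d %| y) * gcdn s d.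
Proof.
move=> d_gt0; set g := gcdn s d.
have g_gt0 : 0 < g by rewrite gcdn_gt0 d_gt0 orbT.
have [dvd_gy|ndvd_gy] := boolP (g %| y); last first.
  rewrite big1 // => t _; apply/eqP; rewrite eqb0.
  apply: contra ndvd_gy => /(dvdn_trans (dvdn_gcdr s d)).
  by rewrite dvdn_addr // dvdn_mulr // dvdn_gcdl.
have [d' def_d] := dvdnP (dvdn_gcdr s d); have [s' def_s] := dvdnP (dvdn_gcdl s d).
have [y' def_y] := dvdnP dvd_gy; rewrite -/g in def_d def_s.
have d'_gt0 : 0 < d' by move: d_gt0; rewrite def_d muln_gt0 => /andP[].
have co_s'd' : coprime s' d'.
  by rewrite /coprime -(eqn_pmul2r g_gt0) mul1n muln_gcdl -def_s -def_d.
have reduce t : (d %| s * t + y) = (d' %| s' * t + y').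
  by rewrite def_d def_s def_y mulnAC -mulnDl dvdn_pmul2r.
have [t0 lt_t0d' sol_t0] := coprime_congr_unique _ _ y' d'_gt0 co_s'd'.
under eq_bigr => t _ do rewrite reduce.
rewrite mul1n def_d mulnC -{1}[g * d']add0n.
rewrite sum_nat_periodic => [|t]; last first.
  by rewrite mulnDr addnAC dvdn_addl // dvdn_mull.
under eq_big_nat => t /andP[_ lt_td'] do rewrite sol_t0 //.
by rewrite sum_nat_count count_uniq_mem ?iota_uniq // mem_iota subn0 lt_t0d' muln1.
Qed.

Lemma count_gcdn_eq d f : 0 < d -> f %| d ->
  \sum_(0 <= s < d) (gcdn s d == f) = totient (d %/ f).
Proof.
move=> d_gt0 dvd_fd; have f_gt0 : 0 < f := dvdn_gt0 d_gt0 dvd_fd.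
have def_d : d = 0 + d %/ f * f by rewrite add0n divnK.
rewrite totient_count_coprime {1 2}def_d sum_nat_blocks; apply: eq_bigr => j _.
rewrite big_ltn // big1_seq ?addn0 => [|r]; last first.
  move=> /andP[_]; rewrite mem_index_iota => /andP[r_gt0 lt_rf].
  apply/eqP; rewrite eqb0.
  apply: contraTneq (dvdn_gcdl (0 + j * f + r) (0 + d %/ f * f)) => ->.
  by rewrite add0n dvdn_addr ?dvdn_mull // gtnNdvd.
by rewrite !add0n -muln_gcdl -[X in _ == X]mul1n eqn_pmul2r // gcdnC.
Qed.

Lemma sum_gcdn (F : nat -> nat) d : 0 < d ->
  \sum_(0 <= s < d) F (gcdn s d) = \sum_(f <- divisors d) F f * totient (d %/ f).
Proof.
move=> d_gt0.
transitivity (\sum_(0 <= s < d) \sum_(f <- divisors d) (gcdn s d == f) * F f).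
  apply: eq_bigr => s _; rewrite (bigD1_seq (gcdn s d)) ?divisors_uniq //=.
    by rewrite eqxx mul1n big1 ?addn0 // => f; rewrite eq_sym => /negbTE ->.
  by rewrite -dvdn_divisors // dvdn_gcdr.
rewrite exchange_big /=; apply: eq_big_seq => f; rewrite -dvdn_divisors // => dvd_fd.
by rewrite -big_distrl /= count_gcdn_eq // mulnC.
Qed.

Definition congr_pairs (d y : nat) : nat :=
  \sum_(0 <= s < d) \sum_(0 <= t < d) (d %| s * t + y).

Lemma congr_pairsE d y : 0 < d ->
  congr_pairs d y = \sum_(f <- divisors (gcdn y d)) f * totient (d %/ f).
Proof.
move=> d_gt0; rewrite /congr_pairs.
under eq_bigr => s _ do rewrite count_linear_congr //.
rewrite (sum_gcdn (fun g => (g %| y) * g)) //.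
transitivity (\sum_(f <- divisors d | f %| y) f * totient (d %/ f)).
  by rewrite [RHS]big_mkcond; apply: eq_bigr => f _; case: (f %| y); rewrite ?mul1n.
rewrite -big_filter; apply/perm_big/uniq_perm => [||f];
  rewrite ?filter_uniq ?divisors_uniq //.
by rewrite mem_filter -!dvdn_divisors ?gcdn_gt0 ?d_gt0 ?orbT // dvdn_gcd andbC.
Qed.

Lemma count_iota_block_bounds (P : pred nat) M C N : 0 < M ->
  (forall c, \sum_(c * M <= n < c.+1 * M) P n = C) ->
  N %/ M * C <= count P (iota 0 N) <= N %/ M * C + C.
Proof.
move=> M_gt0 block_sum.
have sum_prefix k : \sum_(0 <= n < k * M) P n = k * C.
  rewrite big_nat_mul -[in RHS](subn0 k) -sum_nat_const_nat.
  by apply: eq_bigr => c _; exact: block_sum.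
have sum_mono m n : m <= n -> \sum_(0 <= i < m) P i <= \sum_(0 <= i < n) P i.
  by move=> le_mn; rewrite (@big_cat_nat _ _ _ m 0 n) ?leq_addr.
have -> : count P (iota 0 N) = \sum_(0 <= n < N) P n.
  by rewrite sum_nat_count /index_iota subn0.
rewrite -mulSnr -!sum_prefix !sum_mono ?leq_divM //.
by rewrite ltnW // ltn_ceil.
Qed.

Section NaturalDensity.

Local Open Scope ring_scope.

Lemma ratio_dist_le (R : realFieldType) (a c C M N : nat) :
  (0 < M)%N -> (0 < N)%N ->
  (c * M <= N <= c * M + M)%N -> (c * C <= a <= c * C + C)%N ->
  `|C%:R / M%:R - a%:R / N%:R| <= C%:R / N%:R :> R.
Proof.
move=> M_gt0 N_gt0 /andP[le_cM_N le_N_cM] /andP[le_cC_a le_a_cC].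
have M_neq0 : M%:R != 0 :> R by rewrite pnatr_eq0 -lt0n.
have N_neq0 : N%:R != 0 :> R by rewrite pnatr_eq0 -lt0n.
have upper : (a * M)%:R <= (C * N)%:R + (C * M)%:R :> R by rewrite -natrD ler_nat; nia.
have lower : (C * N)%:R <= (a * M)%:R + (C * M)%:R :> R by rewrite -natrD ler_nat; nia.
rewrite (_ : _ - _ = ((C * N)%:R - (a * M)%:R) / (M * N)%:R); last first.
  by rewrite !natrM; field; rewrite M_neq0 N_neq0.
rewrite normrM normfV normr_nat ler_pdivrMr ?ltr0n ?muln_gt0 ?M_gt0 //.
rewrite (_ : _ * _ = (C * M)%:R); last by rewrite !natrM; field.
by rewrite ler_norml; apply/andP; split; lra.
Qed.

Lemma has_natural_density_blocks (R : realType) (P : pred nat) (M C : nat) :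
  (0 < M)%N ->
  (forall c, (\sum_(c * M <= n < c.+1 * M) P n)%N = C) ->
  has_natural_density P (C%:R / M%:R : R).
Proof.
move=> M_gt0 block_sum; apply/cvgrPdist_le => e e_gt0; near=> N.
have N_gt0 : (0 < N)%N by near: N; exact: nbhs_infty_gt.
have N_bounds : (N %/ M * M <= N <= N %/ M * M + M)%N.
  by rewrite leq_divM -mulSnr ltnW // ltn_ceil.
have bounds := count_iota_block_bounds P M C N M_gt0 block_sum.
apply: le_trans (ratio_dist_le R _ _ _ _ _ M_gt0 N_gt0 N_bounds bounds) _.
rewrite ler_pdivrMr ?ltr0n // mulrC -ler_pdivrMr //.
by near: N; exact: nbhs_infty_ger.
Unshelve. all: by end_near. Qed.

End NaturalDensity.

Section Valuation.

Variable q : nat.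
Hypothesis q_gt1 : 1 < q.

Lemma vq_gt0_dvd m : 0 < vq q m -> q %| m.
Proof.
rewrite /vq; case: eqP => // _; apply: contraTT => ndvd_qm; rewrite -leqNgt.
apply/bigmax_leqP => -[[|k] _] //= dvd_qk.
by case/negP: ndvd_qm; exact: dvdn_trans (dvdn_exp _ (dvdnn q)) dvd_qk.
Qed.

Lemma vq_ndvd m : ~~ (q %| m) -> vq q m = 0.
Proof. by apply: contraNeq; rewrite -lt0n; exact: vq_gt0_dvd. Qed.

Lemma vq_mul_ndvd m : 0 < m -> ~~ (q %| m) -> vq q (q * m) = 1.
Proof.
move=> m_gt0 ndvd_qm; have qm_gt0 : 0 < q * m by rewrite muln_gt0 m_gt0 ltnW.
rewrite /vq gtn_eqF //; apply/eqP; rewrite eqn_leq; apply/andP; split.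
  apply/bigmax_leqP => -[[|[|k]] _] //= dvd_qm.
  case/negP: ndvd_qm; rewrite -(dvdn_pmul2l (ltnW q_gt1)) mulnn.
  by rewrite (dvdn_trans _ dvd_qm) // dvdn_exp2l.
have lt1 : 1 < (q * m).+1 by rewrite ltnS.
by apply: (@leq_bigmax_cond _ _ _ (Ordinal lt1)); rewrite /= expn1 dvdn_mulr.
Qed.

Lemma wqS n : wq q n.+1 = wq q n + vq q n.+1.
Proof. by rewrite /wq big_ord_recr. Qed.

Lemma uqS n : uq q n.+1 = uq q n + wq q n.+1.
Proof. by rewrite /uq big_ord_recr. Qed.

Lemma wq_mul_add c r : r < q -> wq q (q * c + r) = wq q (q * c).
Proof.
elim: r => [|r IHr] lt_rq; first by rewrite addn0.
rewrite addnS wqS IHr ?(ltnW lt_rq) // vq_ndvd ?addn0 //.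
by rewrite -addnS dvdn_addr ?dvdn_mulr // gtnNdvd.
Qed.

Lemma wq_mulS c : ~~ (q %| c.+1) -> wq q (q * c.+1) = wq q (q * c) + 1.
Proof.
move=> ndvd_qc; have def_qc : q * c.+1 = (q * c + q.-1).+1.
  by rewrite mulnS addnC -addnS prednK // ltnW.
rewrite def_qc wqS wq_mul_add; last by rewrite ltn_predL ltnW.
by rewrite -def_qc vq_mul_ndvd.
Qed.

Lemma wq_digits c e r : e < q -> r < q ->
  wq q (q * (q * c + e) + r) = wq q (q * (q * c)) + e.
Proof.
move=> + lt_rq; rewrite wq_mul_add //; elim: e => [|e IHe] lt_eq.
  by rewrite !addn0.
rewrite addnS wq_mulS; first by rewrite IHe ?(ltnW lt_eq) // addn1 addnS.
by rewrite -addnS dvdn_addr ?dvdn_mulr // gtnNdvd.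
Qed.

Lemma uq_mod d n : d %| q -> uq q n = n.+1 * wq q n %[mod d].
Proof.
move=> dvd_dq; elim: n => [|n IHn]; first by rewrite /uq /wq !big_ord_recr !big_ord0.
have dvd_dv : d %| n.+1 * vq q n.+1.
  have [->|/vq_gt0_dvd dvd_q] := posnP (vq q n.+1); first by rewrite muln0.
  by rewrite dvdn_mulr // (dvdn_trans dvd_dq dvd_q).
rewrite uqS -modnDml IHn modnDml.
rewrite (_ : n.+2 * _ = n.+1 * vq q n.+1 + (n.+1 * wq q n + wq q n.+1)); last first.
  by rewrite mulSn !wqS; ring.
by rewrite -[RHS]modnDml (eqP dvd_dv) add0n.
Qed.

Lemma uq_digits_mod d c e r : d %| q -> e < q -> r < q ->
  uq q (q * (q * c + e) + r) = r.+1 * (wq q (q * (q * c)) + e) %[mod d].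
Proof.
move=> dvd_dq lt_eq lt_rq; rewrite uq_mod // wq_digits // -addnS mulnDl.
by rewrite -modnDml (eqP (dvdn_mulr _ (dvdn_mulr _ dvd_dq))) add0n.
Qed.

Lemma block_count_uq d y c : 0 < d -> d %| q ->
  \sum_(c * q ^ 2 <= n < c.+1 * q ^ 2) (d %| uq q n + y) =
  (q %/ d) ^ 2 * congr_pairs d y.
Proof.
move=> d_gt0 dvd_dq; set W := wq q (q * (q * c)).
have def_q : q = q %/ d * d by rewrite divnK.
have digit_term e r : e < q -> r < q ->
    (d %| uq q (c * (q * q) + e * q + r) + y) = (d %| r.+1 * (W + e) + y).
  move=> lt_eq lt_rq; rewrite /dvdn -modnDml.
  rewrite (_ : c * (q * q) + e * q + r = q * (q * c + e) + r); last by nia.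
  by rewrite uq_digits_mod // modnDml.
have periodic_l t s : (d %| (s + d) * t + y) = (d %| s * t + y) :> nat.
  by rewrite mulnDl addnAC dvdn_addl // dvdn_mulr.
have periodic_r s t : (d %| s * (t + d) + y) = (d %| s * t + y) :> nat.
  by rewrite mulnDr addnAC dvdn_addl // dvdn_mull.
have sum_digit t : \sum_(0 <= r < q) (d %| r.+1 * t + y) =
    q %/ d * \sum_(0 <= s < d) (d %| s * t + y).
  transitivity (\sum_(1 <= s < 1 + q %/ d * d) (d %| s * t + y)).
    by rewrite -def_q sum_nat_shift.
  exact: sum_nat_periodic.
have sum_shifted s : \sum_(0 <= e < q) (d %| s * (W + e) + y) =
    q %/ d * \sum_(0 <= t < d) (d %| s * t + y).
  transitivity (\sum_(W <= t < W + q %/ d * d) (d %| s * t + y)).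
    by rewrite -def_q sum_nat_shift.
  exact: sum_nat_periodic.
rewrite mulSnr -mulnn sum_nat_blocks.
under eq_big_nat => e /andP[_ lt_eq].
  under eq_big_nat => r /andP[_ lt_rq] do rewrite digit_term //.
  rewrite sum_digit.
  over.
rewrite -big_distrr exchange_big_nat /=.
under eq_bigr => s _ do rewrite sum_shifted.
by rewrite -big_distrr mulnA mulnn.
Qed.

End Valuation.

Local Open Scope ring_scope.

Lemma dvdz_natD_modz (d n : nat) (x : int) : d != 0%N ->
  (d%:Z %| n%:Z + x)%Z = (d %| n + `|(x %% d%:Z)%Z|)%N.
Proof.
move=> d_neq0; rewrite {1}(divz_eq x d%:Z) addrCA rpredDl ?dvdz_mull //.
by rewrite -[(x %% d)%Z]gez0_abs ?modz_ge0 // -PoszD dvdzE !absz_nat.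
Qed.

Lemma absz_gcdz_modz (d : nat) (x : int) :
  `|gcdz x d%:Z|%N = gcdn `|(x %% d%:Z)%Z| d.
Proof. by rewrite -gcdz_modl /gcdz absz_nat. Qed.

Theorem theorem4p2 (R : realType) (d q : nat) (x : int) :
  (2 <= d)%N -> (2 <= q)%N -> (d %| q)%N ->
  has_natural_density (fun n : nat => (d%:Z %| (uq q n)%:Z + x)%Z)
    ((d ^ 2)%:R^-1 *
       \sum_(f <- divisors `|gcdz x d%:Z|%N) ((f * totient (d %/ f))%N%:R : R)).
Proof.
move=> d_ge2 q_gt1 dvd_dq; have d_gt0 : (0 < d)%N by exact: ltnW.
set y := `|(x %% d%:Z)%Z|%N.
have -> : (fun n => (d%:Z %| (uq q n)%:Z + x)%Z) = (fun n => d %| uq q n + y)%N.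
  by apply: funext => n; rewrite dvdz_natD_modz // -lt0n.
rewrite absz_gcdz_modz -natr_sum -congr_pairsE //.
have [k def_q] := dvdnP dvd_dq.
have k_gt0 : (0 < k)%N by move: (ltnW q_gt1); rewrite def_q muln_gt0 => /andP[].
rewrite (_ : _ * _ = ((q %/ d) ^ 2 * congr_pairs d y)%:R / (q ^ 2)%:R); last first.
  rewrite def_q mulnK // !natrX !natrM exprMn; field.
  by rewrite !pnatr_eq0 -!lt0n d_gt0 k_gt0.
apply: has_natural_density_blocks; first by rewrite expn_gt0 ltnW.
by move=> c; apply: block_count_uq.
Qed.
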